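(* There exists a function $f:[0,\infty)\to\mathbb{R}$ with $f(x)\to 0$ as $x\to\infty$ such that for every finite simple graph $G$, \[ \Gamma(G) \leq \frac{\bigl(\mu_1(G)+f(\mu_1(G))\bigr)^2}{2} + 1, \] where $\mu_1(G)$ is the largest root of the matching polynomial of $G$ and $\Gamma(G)$ is the Grundy number of $G$.
   Context: For a graph $G$ on $n$ vertices, the matching polynomial is $\mu_G(x)=\sum_{M}(-1)^{|M|}x^{n-2|M|}$, the sum over all matchings $M\subseteq E(G)$ (including the empty matching); all its roots are real and $\mu_1(G)$ denotes the largest one. Given an ordering $(x_1,\dots,x_n)$ of $V(G)$, the first-fit coloring algorithm colors $x_i$ with the smallest positive integer not used on the neighbors of $x_i$ among $x_1,\dots,x_{i-1}$. The Grundy number $\Gamma(G)$ is the largest number of colors used by the first-fit algorithm over all vertex orderings. *)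

From HB Require Import structures.
From mathcomp Require Import all_boot all_order all_algebra.
From mathcomp Require Import all_classical all_reals all_analysis.
Set Implicit Arguments. Unset Strict Implicit. Unset Printing Implicit Defensive.
Import Order.TTheory GRing.Theory Num.Theory.

Definition simple_graph (T : finType) (e : rel T) : Prop :=
  symmetric e /\ irreflexive e.

Definition is_edge (T : finType) (e : rel T) (S : {set T}) : bool :=
  [exists x, exists y, e x y && (S == [set x; y])].

Definition is_matching (T : finType) (e : rel T) (M : {set {set T}}) : bool :=
  [forall S in M, is_edge e S] &&
  [forall S in M, forall S' in M, (S != S') ==> [disjoint S & S']].

Local Open Scope ring_scope.

Definition matching_poly (R : nzRingType) (T : finType) (e : rel T) : {poly R} :=
  \sum_(M : {set {set T}} | is_matching e M)
     (-1) ^+ #|M| *: 'X^(#|T| - 2 * #|M|)%N.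

(* largest root mu_1(G) (all roots are real; sup of the finite root set) *)
Definition mu1 (R : realType) (T : finType) (e : rel T) : R :=
  sup [set x : R | root (matching_poly R e) x].

Local Close Scope ring_scope.

Definition mex_pos (S : seq nat) : nat :=
  head 0 [seq k <- iota 1 (size S).+1 | k \notin S].

Fixpoint first_fit (T : finType) (e : rel T) (acc : seq (T * nat)) (s : seq T)
  : seq (T * nat) :=
  match s with
  | [::] => acc
  | x :: s' =>
      let c := mex_pos [seq p.2 | p <- acc & e p.1 x] in
      first_fit e (rcons acc (x, c)) s'
  end.

Definition ff_num_colors (T : finType) (e : rel T) (s : seq T) : nat :=
  size (undup [seq p.2 | p <- first_fit e [::] s]).

Definition grundy (T : finType) (e : rel T) : nat :=
  \max_(s <- permutations (enum T)) ff_num_colors e s.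

From mathcomp Require Import all_boot all_order all_algebra.
From mathcomp Require Import all_classical all_reals all_analysis.
From mathcomp Require Import unstable fintype finset polyrcf zify.
From mathcomp.algebra_tactics Require Import ring lra.
Import Order.TTheory GRing.Theory Num.Theory.
Import numFieldNormedType.Exports.
Set Implicit Arguments. Unset Strict Implicit. Unset Printing Implicit Defensive.

(* Write mu_A for the matching polynomial of the subgraph induced by A; it is
   monic, so at the largest root y of all the mu_A every mu_A(y) is >= 0. Above
   the largest root of mu_V every mu_A is positive: otherwise take a smallest A
   with mu_A(y) = 0. Either A is a union of components, and y is a root of
   mu_V = mu_A mu_(V-A), or A has an outside neighbour w, and then
   mu_(A+w)(y) = y mu_A(y) - sum_(u ~ w) mu_(A-u)(y) < 0.
   In a first-fit coloring a vertex of color c+1 sees all colors 1..c, and the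
   same recurrence gives mu_A(x) / mu_(A-v)(x) <= b_c, where b_0 = x and
   b_(c+1) = b_c - 1/b_c. So for x > mu_1 the iterates b_0, ..., b_(k-1),
   k = Gamma, are positive, and b_c^2 = x^2 - 2c + sum_(j < c) b_j^-2 yields
   2(k-1) < x^2 + H_(k-1) <= x^2 + 4 (k-1)^(1/4); this gives the bound with
   f(z) = 2 / sqrt z. *)

Section InducedMatchings.
Variables (T : finType) (e : rel T).
Hypotheses (e_sym : symmetric e) (e_irr : irreflexive e).

Lemma is_edgeP (S : {set T}) :
  reflect (exists x y, e x y /\ S = [set x; y]) (is_edge e S).
Proof.
apply: (iffP existsP) => [[x /existsP [y /andP [exy /eqP ->]]]|[x [y [exy ->]]]].
  by exists x, y.
by exists x; apply/existsP; exists y; rewrite exy eqxx.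
Qed.

Lemma is_matchingP (M : {set {set T}}) :
  reflect ((forall S, S \in M -> is_edge e S) /\
           (forall S S', S \in M -> S' \in M -> S != S' -> [disjoint S & S']))
          (is_matching e M).
Proof.
apply: (iffP andP) => [[/forall_inP H1 /forall_inP H2]|[H1 H2]]; split => //.
- by move=> S S' SM S'M; move: (H2 S SM) => /forall_inP /(_ S' S'M) /implyP.
- by apply/forall_inP.
- by apply/forall_inP => S SM; apply/forall_inP => S' S'M; apply/implyP; apply: H2.
Qed.

Lemma card_edge (S : {set T}) : is_edge e S -> #|S| = 2.
Proof.
case/is_edgeP => x [y [exy ->]]; rewrite cards2.
by case: eqP exy => // ->; rewrite e_irr.
Qed.

Lemma disjoint_set2 (v u : T) (B : {set T}) :
  [disjoint [set v; u] & B] = (v \notin B) && (u \notin B).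
Proof. by rewrite disjoints_subset subUset !sub1set !in_setC. Qed.

Lemma is_matching_subset (M1 M2 : {set {set T}}) :
  M1 \subset M2 -> is_matching e M2 -> is_matching e M1.
Proof.
move=> /subsetP sub /is_matchingP [H1 H2]; apply/is_matchingP; split.
  by move=> S /sub; apply: H1.
by move=> S S' /sub SM /sub S'M; apply: H2.
Qed.

Definition matching_on (A : {set T}) (M : {set {set T}}) :=
  is_matching e M && [forall S in M, S \subset A].

Lemma matching_on_card (A : {set T}) (M : {set {set T}}) :
  matching_on A M -> 2 * #|M| <= #|A|.
Proof.
case/andP => /is_matchingP [H1 H2] /forall_inP H3.
have tri : trivIset M by apply/trivIsetP => S S' SM S'M; apply: H2.
have : \sum_(B in M) #|B| = #|cover M| by apply/eqP.
rewrite (eq_bigr (fun _ => 2)); last by move=> S SM; apply/card_edge/H1.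
rewrite sum_nat_const mulnC => ->; apply: subset_leq_card.
by apply/subsetP => x /bigcupP [S SM xS]; move/subsetP: (H3 S SM); apply.
Qed.

Lemma matching_on0 (A : {set T}) : matching_on A set0.
Proof.
apply/andP; split; last by apply/forall_inP => S; rewrite in_set0.
by apply/is_matchingP; split => [S|S S']; rewrite in_set0.
Qed.

Lemma matching_on_set0 (M : {set {set T}}) : matching_on set0 M = (M == set0).
Proof.
apply/idP/eqP => [/andP [/is_matchingP [H1 _] /forall_inP H3]|->].
  apply/setP => S; rewrite in_set0; apply/negP => SM.
  move: (H3 S SM); rewrite subset0 => /eqP SE.
  by move: (card_edge (H1 S SM)); rewrite SE cards0.
exact: matching_on0.
Qed.

Lemma matching_on_setT (M : {set {set T}}) : matching_on [set: T] M = is_matching e M.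
Proof.
by rewrite /matching_on; case: is_matching => //=; apply/forall_inP => S _; apply: subsetT.
Qed.

Lemma matching_on_setD1 (A : {set T}) (v : T) (M : {set {set T}}) :
  matching_on (A :\ v) M = matching_on A M && [forall S in M, v \notin S].
Proof.
rewrite /matching_on -andbA; congr (_ && _).
apply/forall_inP/andP => [H|[/forall_inP H1 /forall_inP H2] S SM].
  by split; apply/forall_inP => S /H; rewrite subsetD1 => /andP [].
by rewrite subsetD1 H1 // H2.
Qed.

Lemma matching_on_partner (A : {set T}) (v : T) (M : {set {set T}}) :
  matching_on A M -> ~~ [forall S in M, v \notin S] ->
  exists u0, forall u, [&& u \in A :\ v, e v u & [set v; u] \in M] = (u == u0).
Proof.
case/andP => /is_matchingP [H1 H2] /forall_inP H3.
rewrite negb_forall_in => /exists_inP [S0 S0M]; rewrite negbK => vS0.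
have [u0 [evu0 S0E]] : exists u0, e v u0 /\ S0 = [set v; u0].
  case/is_edgeP: (H1 _ S0M) vS0 => x [y [exy ->]].
  rewrite !inE => /orP [/eqP->|/eqP->]; first by exists y.
  by exists x; rewrite e_sym setUC.
exists u0 => u; apply/idP/idP.
- case/and3P => uA evu SM.
  have E : [set v; u] = S0.
    apply/eqP; apply/negPn/negP => /(H2 _ _ SM S0M).
    by rewrite disjoint_set2 vS0.
  have : u \in S0 by rewrite -E !inE eqxx orbT.
  rewrite S0E !inE => /orP [/eqP uv|//].
  by move: evu; rewrite uv e_irr.
- move/eqP ->; rewrite -S0E S0M evu0 !andbT !inE.
  apply/andP; split; first by apply: contraTneq evu0 => ->; rewrite e_irr.
  by move/subsetP: (H3 S0 S0M); apply; rewrite S0E !inE eqxx orbT.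
Qed.

(* The matchings of A containing the edge [v; u] are exactly the [v; u] |: M
   with M a matching of A :\ v :\ u; stated in the shape of [reindex_onto]. *)
Lemma matching_on_setU1_edge (A : {set T}) (v u : T) (M : {set {set T}}) :
  v \in A -> u \in A :\ v -> e v u ->
  [&& matching_on A ([set v; u] |: M), [set v; u] \in [set v; u] |: M
    & ([set v; u] |: M) :\ [set v; u] == M] = matching_on (A :\ v :\ u) M.
Proof.
move=> vA uA evu; set S := [set v; u].
rewrite setU11 /=; apply/idP/idP.
- case/andP => /andP [mat /forall_inP H3] /eqP ME.
  have SM : S \notin M by rewrite -ME setD11.
  have [_ H2] := is_matchingP _ mat.
  apply/andP; split; first exact: is_matching_subset (subsetUr [set S] M) mat.
  apply/forall_inP => S1 S1M.
  have neq : S != S1 by apply: contraNneq SM => ->.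
  have := H2 _ _ (setU11 _ _) (setU1r _ S1M) neq; rewrite disjoint_set2.
  by case/andP => vS1 uS1; rewrite !subsetD1 H3 ?setU1r // vS1 uS1.
- move=> okM; have [/is_matchingP [H1 H2] /forall_inP H3] := andP okM.
  have vu_notin S1 : S1 \in M -> (v \notin S1) && (u \notin S1).
    by move/H3; rewrite !subsetD1 => /andP [/andP [_ ->] ->].
  have SM : S \notin M by apply/negP => /vu_notin; rewrite !inE eqxx.
  rewrite setU1K // eqxx andbT; apply/andP; split.
  + apply/is_matchingP; split.
    * move=> S1; rewrite in_setU1 => /orP [/eqP->|/H1 //].
      by apply/is_edgeP; exists v, u.
    * move=> S1 S2; rewrite !in_setU1.
      case/orP => [/eqP->|S1M] /orP [/eqP->|S2M]; rewrite ?eqxx //.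
      - by rewrite disjoint_set2 => _; apply: vu_notin.
      - by rewrite disjoint_sym disjoint_set2 => _; apply: vu_notin.
      - exact: H2.
  + apply/forall_inP => S1; rewrite in_setU1 => /orP [/eqP->|/H3 sub].
      by rewrite subUset !sub1set vA; case/setD1P: uA.
    exact: subset_trans sub (subset_trans (subsetDl _ _) (subsetDl _ _)).
Qed.

End InducedMatchings.

Lemma head_filter_iota (S : seq nat) m n : has (fun k => k \notin S) (iota m n) ->
  m <= head 0 [seq k <- iota m n | k \notin S] /\
  forall j, m <= j < head 0 [seq k <- iota m n | k \notin S] -> j \in S.
Proof.
elim: n m => [//|n IH] m /=.
case: ifP => [mS _|/negbFE mS hS] /=.
  by split => // j /andP [h1 h2]; move: (leq_trans h2 h1); rewrite ltnn.
have [h1 h2] := IH m.+1 hS; split; first exact: ltnW.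
move=> j /andP; rewrite leq_eqVlt => -[/orP [/eqP <- //|mj] jc].
by apply: h2; rewrite mj jc.
Qed.

Lemma mex_posP (S : seq nat) :
  0 < mex_pos S /\ forall j, 0 < j < mex_pos S -> j \in S.
Proof.
apply: head_filter_iota; apply/negPn/negP => /hasPn noS.
have := uniq_leq_size (iota_uniq 1 (size S).+1) (fun k kI => negbNE (noS k kI)).
by rewrite size_iota ltnn.
Qed.

Lemma bigmax_seq_mem (I : eqType) (r : seq I) (F : I -> nat) :
  \max_(i <- r) F i \in 0 :: map F r.
Proof.
elim: r => [|x r IH]; first by rewrite big_nil inE.
rewrite big_cons /maxn; case: ltnP => _; last by rewrite !inE eqxx orbT.
by move: IH; rewrite /= !inE => /orP [->|->]; rewrite ?orbT.
Qed.

Section FirstFit.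
Variables (T : finType) (e : rel T).

Definition grundy_coloring (col : T -> nat) :=
  forall v j, 0 < j < col v -> exists u, e u v /\ col u = j.

Lemma unzip1_first_fit (acc : seq (T * nat)) s :
  unzip1 (first_fit e acc s) = unzip1 acc ++ s.
Proof.
elim: s acc => [|x s IH] acc /=; first by rewrite cats0.
by rewrite IH /unzip1 map_rcons cat_rcons.
Qed.

Definition first_fit_inv (L : seq (T * nat)) := forall p, p \in L -> 0 < p.2 /\
  forall j, 0 < j < p.2 -> exists2 q, q \in L & e q.1 p.1 /\ q.2 = j.

Lemma first_fit_invP acc s : first_fit_inv acc -> first_fit_inv (first_fit e acc s).
Proof.
elim: s acc => [//|x s IH] acc /= Hacc; apply: IH.
move=> p; rewrite mem_rcons inE => /orP [/eqP ->|pacc] /=.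
  have [h1 h2] := mex_posP [seq p.2 | p <- acc & e p.1 x]; split => // j /h2.
  case/mapP => q; rewrite mem_filter => /andP [eq qacc] ->.
  by exists q; rewrite ?mem_rcons ?inE ?qacc ?orbT.
have [h1 h2] := Hacc p pacc; split => // j /h2 [q qacc hq].
by exists q; rewrite ?mem_rcons ?inE ?qacc ?orbT.
Qed.

Definition color_in (L : seq (T * nat)) (v : T) : nat :=
  (nth (v, 0) L (index v (unzip1 L))).2.

Lemma color_in_mem (L : seq (T * nat)) p :
  uniq (unzip1 L) -> p \in L -> color_in L p.1 = p.2.
Proof.
move=> uL pL; rewrite /color_in.
have iL : index p L < size L by rewrite index_mem.
have -> : index p.1 (unzip1 L) = index p L.
  by rewrite -{1}(nth_index p pL) -(nth_map p p.1) // index_uniq ?size_map.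
by rewrite (set_nth_default p) // nth_index.
Qed.

Lemma first_fit_coloring s : perm_eq s (enum T) ->
  exists col, grundy_coloring col /\ ff_num_colors e s <= \max_v col v.
Proof.
move=> ps; set L := first_fit e [::] s.
have uL : uniq (unzip1 L) by rewrite unzip1_first_fit /= (perm_uniq ps) enum_uniq.
have IL : first_fit_inv L by apply: first_fit_invP.
have memL v : exists2 p, p \in L & p.1 = v.
  have : v \in unzip1 L by rewrite unzip1_first_fit /= (perm_mem ps) mem_enum.
  by case/mapP => p pL ->; exists p.
exists (color_in L); split.
  move=> v j; have [p pL <-] := memL v; rewrite color_in_mem // => /(proj2 (IL p pL)).
  by case=> q qL [eq qj]; exists q.1; rewrite color_in_mem.
rewrite /ff_num_colors -/L -(size_iota 1 (\max_v color_in L v)).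
apply: (uniq_leq_size (undup_uniq _)) => c; rewrite mem_undup => /mapP [p pL ->].
rewrite mem_iota add1n ltnS (proj1 (IL p pL)) -(color_in_mem uL pL).
exact: leq_bigmax.
Qed.

Lemma grundy_coloring_witness : 0 < grundy e ->
  exists col v, grundy_coloring col /\ grundy e <= col v.
Proof.
have := bigmax_seq_mem (permutations (enum T)) (ff_num_colors e).
rewrite -/(grundy e) inE => /orP [/eqP -> //|/mapP [s sP ->] g0].
rewrite mem_permutations in sP; have [col [colP ffle]] := first_fit_coloring sP.
have T_gt0 : 0 < #|T|.
  rewrite lt0n; apply: contraTneq g0 => /card0_eq T0.
  by rewrite -leqNgt (leq_trans ffle) // big_pred0.
have [v vE] := bigop.eq_bigmax col T_gt0.
by exists col, v; rewrite -vE.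
Qed.

End FirstFit.

Local Open Scope ring_scope.

Section MatchingPolynomialOn.
Variables (R : comNzRingType) (T : finType) (e : rel T).
Hypotheses (e_sym : symmetric e) (e_irr : irreflexive e).

Definition matching_poly_on (A : {set T}) : {poly R} :=
  \sum_(M | matching_on e A M) (-1) ^+ #|M| *: 'X^(#|A| - 2 * #|M|)%N.

Lemma matching_poly_on_setT : matching_poly R e = matching_poly_on [set: T].
Proof.
by apply: eq_big => [M|M _]; rewrite ?matching_on_setT ?cardsT.
Qed.

Lemma matching_poly_on_set0 : matching_poly_on set0 = 1.
Proof.
rewrite /matching_poly_on (big_pred1 set0) => [|M]; last exact: matching_on_set0.
by rewrite !cards0 expr0 scale1r.
Qed.

Lemma matching_poly_on_monic (A : {set T}) : matching_poly_on A \is monic.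
Proof.
apply/monicP; rewrite /matching_poly_on (bigD1 set0) ?matching_on0 //=.
rewrite cards0 muln0 subn0 expr0 scale1r lead_coefDl ?lead_coefXn //.
rewrite size_polyXn ltnS; apply: (leq_trans (size_sum _ _ _)).
apply/bigmax_leqP => M /andP [okM M0].
apply: (leq_trans (size_scale_leq _ _)); rewrite size_polyXn.
rewrite -card_gt0 in M0; rewrite ltn_subrL muln_gt0 M0 /=.
by apply: leq_trans (matching_on_card e_irr okM); rewrite muln_gt0.
Qed.

Lemma matching_poly_on_edge (A : {set T}) (v u : T) : v \in A -> u \in A :\ v -> e v u ->
  \sum_(M | matching_on e A M && ([set v; u] \in M))
     (-1) ^+ #|M| *: 'X^(#|A| - 2 * #|M|)%N
  = - matching_poly_on (A :\ v :\ u).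
Proof.
move=> vA uA evu; set S := [set v; u].
rewrite (reindex_onto (fun M' => S |: M') (fun M => M :\ S)) /=; last first.
  by move=> M /andP [_ SM]; rewrite setD1K.
rewrite /matching_poly_on -sumrN; apply: eq_big => M'.
  by rewrite -andbA; apply: matching_on_setU1_edge.
rewrite -andbA matching_on_setU1_edge // => okM'.
have SM' : S \notin M'.
  apply/negP => SM; case/andP: okM' => _ /forall_inP /(_ S SM).
  by rewrite !subsetD1 !inE eqxx !andbF.
rewrite cardsU1 SM' exprS mulN1r scaleNr; congr (- (_ *: 'X^_)).
have := matching_on_card e_irr okM'.
rewrite (cardsD1 v A) vA (cardsD1 u (A :\ v)) uA; lia.
Qed.

Lemma matching_poly_on_rec (A : {set T}) (v : T) : v \in A ->
  matching_poly_on A = 'X * matching_poly_on (A :\ v)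
                       - \sum_(u in A :\ v | e v u) matching_poly_on (A :\ v :\ u).
Proof.
move=> vA; rewrite {1}/matching_poly_on.
rewrite (bigID (fun M : {set {set T}} => [forall S in M, v \notin S])) /=.
congr (_ + _).
  rewrite /matching_poly_on mulr_sumr; apply: eq_big => M.
    by rewrite matching_on_setD1.
  rewrite -matching_on_setD1 => okM.
  have := matching_on_card e_irr okM; rewrite (cardsD1 v A) vA => le.
  by rewrite add1n subSn // exprS scalerAr.
rewrite -sumrN.
transitivity (\sum_(M | matching_on e A M && ~~ [forall S in M, v \notin S])
   \sum_(u | [&& u \in A :\ v, e v u & [set v; u] \in M])
      ((-1) ^+ #|M| *: 'X^(#|A| - 2 * #|M|)%N : {poly R})).
  apply: eq_bigr => M /andP [okM cov].
  by have [u0 Hu0] := matching_on_partner e_sym e_irr okM cov; rewrite (big_pred1 u0 Hu0).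
rewrite (exchange_big_dep (fun u => (u \in A :\ v) && e v u)) /=; last first.
  by move=> M u _ /and3P [-> ->].
apply: eq_bigr => u /andP [uA evu]; rewrite -(matching_poly_on_edge vA uA evu).
apply: eq_bigl => M; rewrite uA evu /=.
case SM: ([set v; u] \in M); rewrite ?andbF ?andbT //.
case: (matching_on e A M) => //=.
by apply/negP => /forall_inP /(_ _ SM); rewrite !inE eqxx.
Qed.

Lemma setD1U (H K : {set T}) (w : T) : w \notin H -> (H :|: K) :\ w = H :|: (K :\ w).
Proof.
by move=> wH; apply/setP => x; rewrite !inE; case: eqP => // ->; rewrite (negPf wH).
Qed.

Lemma matching_poly_onU (H K : {set T}) : [disjoint H & K] ->
  (forall h k, h \in H -> k \in K -> ~~ e k h) ->
  matching_poly_on (H :|: K) = matching_poly_on H * matching_poly_on K.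
Proof.
have [n] := ubnP #|K|; elim: n K => // n IH K /ltnSE leKn dHK noE.
have [->|[w wK]] := set_0Vmem K; first by rewrite setU0 matching_poly_on_set0 mulr1.
have IHK (K' : {set T}) : K' \proper K ->
    matching_poly_on (H :|: K') = matching_poly_on H * matching_poly_on K'.
  move=> ltK; have /subsetP subK := proper_sub ltK.
  apply: IH; first exact: leq_trans (proper_card ltK) leKn.
    exact: disjointWr (proper_sub ltK) dHK.
  by move=> h k hH /subK; apply: noE.
have wH : w \notin H by rewrite (disjointFl dHK wK).
have ltKw : K :\ w \proper K by apply: properD1.
rewrite (matching_poly_on_rec (subsetP (subsetUr H K) w wK)) setD1U //.
rewrite (matching_poly_on_rec wK) IHK // mulrBr mulrCA; congr (_ - _).
rewrite mulr_sumr (eq_bigl (fun u => (u \in K :\ w) && e w u)); last first.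
  move=> u; rewrite in_setU; case uH: (u \in H) => //=.
  by move: (noE _ _ uH wK); case: (e w u); rewrite ?andbF //; case: (u \in K :\ w).
apply: eq_bigr => u /andP [uKw _].
have uH : u \notin H by rewrite (disjointFl dHK) //; case/setD1P: uKw.
by rewrite setD1U // IHK // (sub_proper_trans (subsetDl _ _) ltKw).
Qed.

Lemma matching_poly_on_setC (H : {set T}) :
  (forall w u, w \notin H -> u \in H -> ~~ e w u) ->
  matching_poly R e = matching_poly_on H * matching_poly_on (~: H).
Proof.
move=> noE; rewrite matching_poly_on_setT -(setUCr H).
apply: matching_poly_onU => //; first by rewrite disjoints_subset setCK.
by move=> h k hH; rewrite in_setC => kH; apply: noE.
Qed.

End MatchingPolynomialOn.

Section MatchingPolynomialSign.
Variables (R : numDomainType) (T : finType) (e : rel T).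
Hypotheses (e_sym : symmetric e) (e_irr : irreflexive e).
Local Notation mu := (matching_poly_on R e).

Lemma matching_poly_on_setU1_lt0 (H : {set T}) (w u : T) (y : R) :
  w \notin H -> u \in H -> e w u -> root (mu H) y ->
  (forall B : {set T}, B \proper H -> 0 < (mu B).[y]) -> (mu (w |: H)).[y] < 0.
Proof.
move=> wH uH ewu /eqP rootH gt0_proper.
rewrite (matching_poly_on_rec _ e_sym e_irr (setU11 w H)) setU1K //.
rewrite hornerD hornerN hornerM rootH mulr0 add0r oppr_lt0 horner_sum.
rewrite (bigD1 u) /=; last by rewrite uH ewu.
apply: ltr_pwDl; first by apply: gt0_proper; apply: properD1.
apply: sumr_ge0 => v /andP [/andP [vH _] _]; apply/ltW/gt0_proper.
exact: properD1.
Qed.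

End MatchingPolynomialSign.

Section RealClosedRoots.
Variable R : rcfType.
Implicit Types (p : {poly R}) (x : R).

Lemma monic_gt0_above_roots p x :
  p \is monic -> (forall y, x <= y -> ~~ root p y) -> 0 < p.[x].
Proof.
move=> /monicP lp noroot.
have /sgp_pinftyP sgp : {in `[x, +oo[, forall y, ~~ root p y}.
  by move=> y; rewrite in_itv andbT => /noroot.
have := sgp x; rewrite in_itv /= lexx /sgp_pinfty lp sgr1 => /(_ isT) /eqP.
by rewrite sgr_cp0.
Qed.

Lemma monic_ge0_above_roots p x :
  p \is monic -> (forall y, x < y -> ~~ root p y) -> 0 <= p.[x].
Proof.
move=> mp noroot; have [/eqP -> //|nrx] := boolP (root p x).
apply/ltW/monic_gt0_above_roots => // y; rewrite le_eqVlt => /orP [/eqP <- //|].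
exact: noroot.
Qed.

Lemma largest_root p r : p != 0 -> root p r ->
  exists z, [/\ root p z, r <= z & forall y, z < y -> ~~ root p y].
Proof.
move=> p0 rr.
have above_cb y : cauchy_bound p <= y -> ~~ root p y.
  by move=> cy; apply: ge_cauchy_bound; rewrite ?in_itv /= ?cy.
have r_cb : r < cauchy_bound p by rewrite ltNge; apply: contraL rr; apply: above_cb.
case: (prev_rootP p (r - 1) (cauchy_bound p)) => [/eqP|z _ /eqP rz _ noroot|c _ _ noroot].
- by rewrite (negPf p0).
- have rz' : r <= z.
    rewrite leNgt; apply: contraL rr => zr; apply: noroot.
    by rewrite in_itv /= zr r_cb.
  exists z; split => // y zy; have [yc|/above_cb //] := ltP y (cauchy_bound p).
  by apply: noroot; rewrite in_itv /= zy yc.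
- by move: rr; rewrite (negPf (noroot r _)) // in_itv /= r_cb andbT ltrBlDr ltrDl.
Qed.

Lemma root_prod (I : finType) (F : I -> {poly R}) x :
  root (\prod_i F i) x = [exists i, root (F i) x].
Proof.
have -> : \prod_i F i = \prod_(q <- [seq F i | i <- index_enum I]) q by rewrite big_map.
rewrite -[LHS]negbK root_bigmul all_map -[RHS]negbK negb_exists; congr (~~ _).
by apply/allP/forallP => [H i|H i _]; [apply: H; rewrite mem_index_enum | apply: H].
Qed.

End RealClosedRoots.

Section AboveLargestRoot.
Variables (R : rcfType) (T : finType) (e : rel T).
Hypotheses (e_sym : symmetric e) (e_irr : irreflexive e).
Local Notation mu := (matching_poly_on R e).

Lemma matching_poly_on_gt0 (x : R) :
  (forall y, x <= y -> ~~ root (matching_poly R e) y) -> forall A, 0 < (mu A).[x].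
Proof.
move=> noroot A0; rewrite ltNge; apply/negP => le0.
have monic_mu B : mu B \is monic := matching_poly_on_monic R e_irr B.
have [r [xr rA0]] : exists r, x <= r /\ root (mu A0) r.
  apply: contrapT => nr; move: le0; apply/negP; rewrite -ltNge.
  apply: monic_gt0_above_roots (monic_mu _) _ => y xy.
  by apply/negP => ry; apply: nr; exists y.
have P0 : \prod_B mu B != 0.
  by apply/prodf_neq0 => B _; apply/monic_neq0/monic_mu.
have rP : root (\prod_B mu B) r by rewrite root_prod; apply/existsP; exists A0.
have [y [ryP ry noroot_above]] := largest_root P0 rP.
have ge0 B : 0 <= (mu B).[y].
  apply: monic_ge0_above_roots (monic_mu _) _ => z /noroot_above.
  by rewrite root_prod negb_exists => /forallP.
have [B0 rB0] : exists B, root (mu B) y by apply/existsP; rewrite -root_prod.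
have [H rH Hmin] :=
  arg_minnP (fun B : {set T} => #|B|) (rB0 : (fun B => root (mu B) y) B0).
have gt0_proper (B : {set T}) : B \proper H -> 0 < (mu B).[y].
  move=> BH; rewrite lt_def ge0 andbT; apply: contraTN (proper_card BH) => rB.
  by rewrite -leqNgt; apply: Hmin.
have [[w [u [wH uH ewu]]]|closed] := pselect (exists w u, [/\ w \notin H, u \in H & e w u]).
  have := ge0 (w |: H); rewrite leNgt => /negP; apply.
  by apply: (matching_poly_on_setU1_lt0 e_sym e_irr wH uH ewu rH) => B; apply: gt0_proper.
have noE w u : w \notin H -> u \in H -> ~~ e w u.
  by move=> wH uH; apply/negP => ewu; apply: closed; exists w, u.
move: (noroot y (le_trans xr ry)).
by rewrite (matching_poly_on_setC R e_sym e_irr noE) rootM rH.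
Qed.

End AboveLargestRoot.

Section LargestMatchingRoot.
Variables (R : realType) (T : finType) (e : rel T).
Hypotheses (e_sym : symmetric e) (e_irr : irreflexive e).

Lemma root_le_mu1 (y : R) : root (matching_poly R e) y -> y <= mu1 R e.
Proof.
move=> ry; have p0 : matching_poly R e != 0.
  by rewrite matching_poly_on_setT; apply/monic_neq0/(matching_poly_on_monic R e_irr).
apply: (sup_upper_bound _ ry); split; first by exists y.
exists (cauchy_bound (matching_poly R e)) => z /= /rootP rz.
exact/ltW/(le_lt_trans (ler_norm z))/cauchy_boundP.
Qed.

Lemma matching_poly_on_gt0_mu1 (x : R) (A : {set T}) :
  mu1 R e < x -> 0 < (matching_poly_on R e A).[x].
Proof.
move=> mux; apply: matching_poly_on_gt0 => // y xy; apply/negP => /root_le_mu1.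
by rewrite leNgt (lt_le_trans mux xy).
Qed.

End LargestMatchingRoot.

Section Shrink.
Variable R : realFieldType.
Implicit Types (t x : R).

Definition shrink t := t - t^-1.

Lemma iter_shrink_sum x n : iter n shrink x = x - \sum_(j < n) (iter j shrink x)^-1.
Proof.
elim: n => [|n IH]; first by rewrite big_ord0 subr0.
by rewrite big_ord_recr iterS {1}/shrink {1}IH opprD addrA.
Qed.

Lemma shrink_sqr t : t != 0 -> shrink t ^+ 2 = t ^+ 2 - 2 + (t ^+ 2)^-1.
Proof. by move=> t0; rewrite /shrink; field. Qed.

Lemma shrink_gt0_sqr_gt1 t : 0 < t -> 0 < shrink t -> 1 < t ^+ 2.
Proof.
by move=> t0; rewrite subr_gt0 -(ltr_pM2r t0) mulVf ?gt_eqF // expr2.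
Qed.

Section PositiveIterates.
Variables (x : R) (k : nat).
Hypothesis iter_gt0 : forall j, (j <= k)%N -> 0 < iter j shrink x.
Local Notation b j := (iter j shrink x).

Lemma iter_shrink_sqr_sum i : (i <= k)%N ->
  b i ^+ 2 = x ^+ 2 - 2 * i%:R + \sum_(j < i) (b j ^+ 2)^-1.
Proof.
elim: i => [|i IH] ik; first by rewrite big_ord0 mulr0 subr0 addr0.
rewrite iterS shrink_sqr ?gt_eqF ?iter_gt0 ?(ltnW ik) // {1}IH ?(ltnW ik) //.
by rewrite big_ord_recr -natr1 /=; ring.
Qed.

Lemma iter_shrink_sqr_gt d : (d <= k)%N -> d%:R < b (k - d) ^+ 2.
Proof.
elim: d => [|d IH] dk; first by rewrite subn0 exprn_gt0 ?iter_gt0.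
have kd : (k - d = (k - d.+1).+1)%N by lia.
set c := b (k - d.+1).
have c_gt0 : 0 < c by apply: iter_gt0; rewrite leq_subr.
have c_gt1 : 1 < c ^+ 2.
  by apply: shrink_gt0_sqr_gt1 => //; rewrite -iterS -kd iter_gt0 ?leq_subr.
have := IH (ltnW dk); rewrite kd iterS shrink_sqr ?gt_eqF // -/c.
have : (c ^+ 2)^-1 < 1 by rewrite invf_lt1 // (lt_trans ltr01 c_gt1).
rewrite -natr1; lra.
Qed.

Lemma iter_shrink_bound :
  k%:R < x ^+ 2 /\ 2 * k%:R < x ^+ 2 + \sum_(i < k) (i.+1%:R)^-1.
Proof.
split; first by have := iter_shrink_sqr_gt (leqnn k); rewrite subnn.
have : 0 < b k ^+ 2 by rewrite exprn_gt0 ?iter_gt0.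
rewrite iter_shrink_sqr_sum // => bk_gt0.
suff : \sum_(j < k) (b j ^+ 2)^-1 <= \sum_(i < k) (i.+1%:R)^-1 by lra.
rewrite [X in _ <= X](reindex_inj rev_ord_inj) /=; apply: ler_sum => i _.
have ik := ltn_ord i.
have := iter_shrink_sqr_gt (leq_subr i k); rewrite subKn ?(ltnW ik) // subnSK // => lt.
have ki_gt0 : (0 : R) < (k - i)%:R by rewrite ltr0n subn_gt0.
by rewrite lef_pV2 ?ltW // posrE (lt_trans ki_gt0).
Qed.

End PositiveIterates.
End Shrink.
Arguments shrink {R}.

Local Notation root4 a := (Num.sqrt (Num.sqrt a)).

Section FourthRoot.
Variable R : rcfType.

Lemma root4K (a : R) : 0 <= a -> root4 a ^+ 4 = a.
Proof.
by move=> a0; rewrite (_ : 4 = 2 * 2)%N // exprM !sqr_sqrtr ?sqrtr_ge0.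
Qed.

Lemma subr_pow4_le (p q : R) :
  0 <= p -> p <= q -> q ^+ 4 - p ^+ 4 <= 4 * q ^+ 3 * (q - p).
Proof.
move=> p0 pq; have q0 := le_trans p0 pq.
have pq2 : p * p <= q * q by rewrite ler_pM.
have pq3 : p * p * p <= q * q * q by rewrite ler_pM ?mulr_ge0.
have -> : q ^+ 4 - p ^+ 4 = (q - p) * (q ^+ 3 + q ^+ 2 * p + q * p ^+ 2 + p ^+ 3) by ring.
rewrite mulrC ler_wpM2r ?subr_ge0 //.
have : q * q * p <= q * q * q by rewrite ler_wpM2l ?mulr_ge0.
have : q * (p * p) <= q * (q * q) by rewrite ler_wpM2l.
rewrite !exprS expr0 !mulr1; lra.
Qed.

Lemma harmonic_le_root4 m : \sum_(i < m) (i.+1%:R)^-1 <= 4 * root4 (m%:R : R).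
Proof.
elim: m => [|m IH]; first by rewrite big_ord0 !sqrtr0 mulr0.
rewrite big_ord_recr /=.
set p := root4 (m%:R : R); set q := root4 (m.+1%:R : R).
have p0 : 0 <= p by rewrite sqrtr_ge0.
have pq : p <= q by rewrite !ler_sqrt ?sqrtr_ge0 ?ler_nat.
have q0 := le_trans p0 pq.
have q4 : q ^+ 4 = m.+1%:R by rewrite root4K.
have q1 : 1 <= q by rewrite -(ler_pXn2r (_ : 0 < 4)%N) ?nnegrE // expr1n q4 ler1n.
have gap : 1 <= 4 * q ^+ 3 * (q - p).
  by have := subr_pow4_le p0 pq; rewrite q4 root4K // -natr1 addrAC subrr add0r.
have last_term : (m.+1%:R)^-1 <= 4 * (q - p).
  rewrite -q4 -div1r ler_pdivrMr ?exprn_gt0 ?(lt_le_trans ltr01) //.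
  have -> : 4 * (q - p) * q ^+ 4 = q * (4 * q ^+ 3 * (q - p)) by ring.
  by have := ler_pM ler01 ler01 q1 gap; rewrite mul1r.
apply: (le_trans (lerD IH last_term)); rewrite /p; lra.
Qed.

End FourthRoot.

Section SquareBounds.
Variable R : rcfType.

Lemma sqr_le_of_forall_gt (a c : R) :
  0 <= a -> (forall x, a < x -> c < x ^+ 2) -> c <= a ^+ 2.
Proof.
move=> a0 lt_c; have [c0|c_gt0] := leP c 0; first exact: le_trans c0 (sqr_ge0 a).
rewrite -(sqr_sqrtr (ltW c_gt0)) ler_pXn2r ?nnegrE ?sqrtr_ge0 //.
apply/ler_gtP => z az; have z0 : 0 <= z by rewrite ltW ?(le_lt_trans a0 az).
rewrite -(ler_pXn2r (_ : 0 < 2)%N) ?nnegrE ?sqrtr_ge0 // sqr_sqrtr ?(ltW c_gt0) //.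
exact: ltW (lt_c z az).
Qed.

Lemma sqr_add_div_sqrt_ge (a s : R) : 0 < a -> s <= Num.sqrt a ->
  a ^+ 2 + 4 * s <= (a + 2 / Num.sqrt a) ^+ 2.
Proof.
move=> a0 sa; set t := Num.sqrt a.
have t0 : 0 < t by rewrite sqrtr_gt0.
have -> : (a + 2 / t) ^+ 2 = a ^+ 2 + 4 * t + (2 / t) ^+ 2.
  by rewrite -(sqr_sqrtr (ltW a0)) -/t; field; rewrite gt_eqF.
by rewrite -addrA lerD2l -[4 * s]addr0 lerD ?sqr_ge0 ?ler_wpM2l.
Qed.

End SquareBounds.

Lemma ler_sum_subpred (R : numDomainType) (I : finType) (P Q : pred I) (F : I -> R) :
  (forall i, P i -> Q i) -> (forall i, Q i -> 0 <= F i) ->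
  \sum_(i | P i) F i <= \sum_(i | Q i) F i.
Proof.
move=> PQ F0; rewrite [X in _ <= X](bigID P) /=.
rewrite (eq_bigl P) => [|i]; last by case Pi: (P i); rewrite ?andbT ?andbF ?PQ.
by rewrite lerDl sumr_ge0 // => i /andP [/F0].
Qed.

Section GrundyRatio.
Variables (R : realFieldType) (T : finType) (e : rel T).
Hypotheses (e_sym : symmetric e) (e_irr : irreflexive e).
Variables (col : T -> nat) (x : R).
Hypothesis colP : grundy_coloring e col.
Hypothesis mu_gt0 : forall A, 0 < (matching_poly_on R e A).[x].
Local Notation mu A := (matching_poly_on R e A).[x].

(* By the recurrence, mu A / mu (A :\ v) is x minus the sum over u ~ v of
   mu (A :\ v :\ u) / mu (A :\ v). By induction a neighbour of color j+1
   contributes at least 1/b_j to it, while b_c = x - sum_(j < c) 1/b_j. *)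
Lemma matching_poly_on_ratio_le c (v : T) (A : {set T}) : col v = c.+1 -> v \in A ->
  (forall w, (col w <= c)%N -> w \in A) -> mu A / mu (A :\ v) <= iter c shrink x.
Proof.
elim/ltn_ind: c v A => c IH v A cv vA lowA.
have D_gt0 := mu_gt0 (A :\ v).
rewrite (matching_poly_on_rec _ e_sym e_irr vA) hornerD hornerN hornerM hornerX.
rewrite mulrBl mulfK ?gt_eqF // iter_shrink_sum lerD2l lerN2 horner_sum mulr_suml.
pose g (j : 'I_c) := odflt v [pick u | e u v && (col u == j.+1)].
have gP (j : 'I_c) : e (g j) v /\ col (g j) = j.+1.
  rewrite /g; case: pickP => [u /andP [euv /eqP cu] //|none].
  have [u [euv cu]] : exists u, e u v /\ col u = j.+1 by apply: colP; rewrite cv /= ltnS.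
  by move: (none u); rewrite euv cu eqxx.
have g_inj : injective g.
  by move=> i j gij; apply/val_inj/succn_inj; rewrite -(proj2 (gP i)) -(proj2 (gP j)) gij.
have gA (j : 'I_c) : g j \in A :\ v.
  have [_ cg] := gP j; rewrite !inE lowA ?cg // andbT.
  by apply: contra_ltnN (ltn_ord j) => /eqP gv; rewrite -ltnS -cg gv cv.
apply: (@le_trans _ _ (\sum_(j < c) mu (A :\ v :\ g j) / mu (A :\ v))).
  apply: ler_sum => j _.
  have ratio_le : mu (A :\ v) / mu (A :\ v :\ g j) <= iter j shrink x.
    apply: IH (proj2 (gP j)) (gA j) _ => // w cw.
    rewrite !inE lowA ?(leq_trans cw (ltnW (ltn_ord j))) //.
    by rewrite andbT; apply: contraTneq cw => ->; rewrite cv -ltnNge ltnS ltnW.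
  have ratio_gt0 : 0 < mu (A :\ v) / mu (A :\ v :\ g j) by rewrite divr_gt0.
  have b_gt0 := lt_le_trans ratio_gt0 ratio_le.
  by rewrite -invf_div lef_pV2 ?posrE.
have -> : \sum_(j < c) mu (A :\ v :\ g j) / mu (A :\ v)
          = \sum_(u in g @: [set: 'I_c]) mu (A :\ v :\ u) / mu (A :\ v).
  rewrite big_imset => [|i j _ _ /g_inj //].
  by apply: eq_bigl => i; rewrite inE.
apply: ler_sum_subpred => [u /imsetP [j _ ->]|u _]; last by rewrite divr_ge0 ?ltW.
by rewrite gA e_sym (proj1 (gP j)).
Qed.

Lemma iter_shrink_gt0 k v : (k <= col v)%N -> forall j, (j < k)%N -> 0 < iter j shrink x.
Proof.
move=> kv j jk.
have [u cu] : exists u, col u = j.+1.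
  move: (leq_trans jk kv); rewrite leq_eqVlt => /orP [/eqP jv|jv]; first by exists v.
  by have [u [_ cu]] := colP (j := j.+1) jv; exists u.
have := matching_poly_on_ratio_le cu (in_setT u) (fun w _ => in_setT w).
by apply: lt_le_trans; rewrite divr_gt0.
Qed.

End GrundyRatio.

Lemma grundy_bound_above_mu1 (R : realType) (T : finType) (e : rel T) (x : R) :
  symmetric e -> irreflexive e -> mu1 R e < x -> (0 < grundy e)%N ->
  let m := (grundy e).-1 in
  [/\ 0 < x, m%:R < x ^+ 2 & 2 * m%:R < x ^+ 2 + 4 * root4 (m%:R : R)].
Proof.
move=> e_sym e_irr mux g0 m.
have mu_gt0 A := matching_poly_on_gt0_mu1 e_sym e_irr A mux.
have [col [v [colP gv]]] := grundy_coloring_witness g0.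
have b_gt0 j : (j <= m)%N -> 0 < iter j shrink x.
  move=> jm; apply: (iter_shrink_gt0 e_sym e_irr colP mu_gt0 gv).
  by rewrite (leq_ltn_trans jm) ?prednK.
have [m_lt bound] := iter_shrink_bound b_gt0.
split => //; first exact: (b_gt0 0%N).
by apply: (lt_le_trans bound); rewrite lerD2l harmonic_le_root4.
Qed.

Local Open Scope classical_set_scope.
Local Open Scope ring_scope.

Lemma div_sqrt_cvg0 (R : realType) (c : R) :
  (fun z => c / Num.sqrt z) x @[x --> +oo] --> 0.
Proof.
apply/cvgrPdist_lt => eps eps0; exists ((`|c| / eps) ^+ 2).
split; first by rewrite num_real.
move=> z cz; have z0 : 0 < z by apply: le_lt_trans (sqr_ge0 _) cz.
have sz : `|c| / eps < Num.sqrt z.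
  have ce0 : 0 <= `|c| / eps by rewrite divr_ge0 // ltW.
  by rewrite -(ltr_pXn2r (_ : 0 < 2)%N) ?nnegrE ?sqrtr_ge0 // sqr_sqrtr // ltW.
rewrite sub0r normrN normrM normfV (ger0_norm (sqrtr_ge0 z)).
by rewrite ltr_pdivrMr ?sqrtr_gt0 // mulrC -ltr_pdivrMr.
Qed.

Theorem theorem1 (R : realType) :
  exists f : R -> R,
    f x @[x --> +oo] --> 0 /\
    forall (T : finType) (e : rel T), simple_graph e ->
      (grundy e)%:R <= (mu1 R e + f (mu1 R e)) ^+ 2 / 2 + 1.
Proof.
exists (fun z : R => 2 / Num.sqrt z); split; first exact: div_sqrt_cvg0.
move=> T e [e_sym e_irr]; set mu := mu1 R e.
have [g0|g_gt0] := posnP (grundy e); first by rewrite g0 addr_ge0 ?divr_ge0 ?sqr_ge0.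
have bound x : mu < x -> _ := grundy_bound_above_mu1 e_sym e_irr ^~ g_gt0.
move: bound; set m := (grundy e).-1 => bound.
have mu0 : 0 <= mu by apply/ler_gtP => x /bound [/ltW].
have m_le : m%:R <= mu ^+ 2 by apply: sqr_le_of_forall_gt mu0 _ => x /bound [].
have m2_le : 2 * m%:R - 4 * root4 (m%:R : R) <= mu ^+ 2.
  by apply: sqr_le_of_forall_gt mu0 _ => x /bound [_ _]; lra.
rewrite -(prednK g_gt0) -/m -natr1 lerD2r ler_pdivlMr //.
move: mu0; rewrite le_eqVlt => /orP [/eqP mu_eq0|mu_gt0].
  rewrite -mu_eq0 expr2 mulr0 in m_le.
  by apply: le_trans (sqr_ge0 _); lra.
have r_le : root4 (m%:R : R) <= Num.sqrt mu.
  rewrite -(ler_pXn2r (_ : 0 < 4)%N) ?nnegrE ?sqrtr_ge0 // root4K //.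
  by rewrite (_ : 4 = 2 * 2)%N // exprM sqr_sqrtr ?(ltW mu_gt0).
by have := sqr_add_div_sqrt_ge mu_gt0 r_le; lra.
Qed.
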